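(* Suppose Assumptions 1 and 3 hold and $\boldsymbol{x}\notin\mathcal{Z}$. Then $H(\rho)$ is nonincreasing on $(0,\infty)$. Furthermore, the Lagrange multiplier $\rho^*$ of the KKT system of the projection of $\boldsymbol{x}$ onto $\mathcal{Z}$ satisfies $\rho^*>0$, and $h<0$ for every $h\in\mathcal{K}_H(\rho^* )$.
   Context: Assumption 1: $l:\mathbb{R}\to\mathbb{R}$ is nondecreasing and convex, and $\inf_x l(x)<\lambda$. Assumption 3: $l$ is differentiable and nonconstant, and $l'$ is semismooth with respect to its Clarke subdifferential $\partial l'$. $\mathcal{Z}=\{\boldsymbol{z}\in\mathbb{R}^m:\frac1m\sum_i l(z_i)\le\lambda\}$. The projection problem is $\min_{\boldsymbol{u}}\frac12\|\boldsymbol{u}-\boldsymbol{x}\|^2$ s.t. $\boldsymbol{u}\in\mathcal{Z}$, with KKT system $u_i-x_i+\frac{\rho}{m}l'(u_i)=0$ for all $i$, $\rho(\frac1m\sum_i l(u_i)-\lambda)=0$, $\rho\ge0$, $\frac1m\sum_il(u_i)\le\lambda$. $L(\boldsymbol{u})=\sum_i l(u_i)$, $\nabla L(\boldsymbol{u})=(l'(u_i))_i$, $\partial\nabla L(\boldsymbol{u})=\{\mathrm{diag}(\eta_1,\dots,\eta_m):\eta_i\in\partial l'(u_i)\}$. For $\rho>0$, $\boldsymbol{u}(\rho)$ is the unique solution of $\boldsymbol{u}-\boldsymbol{x}+\frac{\rho}{m}\nabla L(\boldsymbol{u})=\boldsymbol{0}$, $H(\rho)=L(\boldsymbol{u}(\rho))-m\lambda$,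 and $\mathcal{K}_H(\rho)=\{-\nabla L(\boldsymbol{u})^\top(m\mathbf{I}_m+\rho\Lambda)^{-1}\nabla L(\boldsymbol{u}):\Lambda\in\partial\nabla L(\boldsymbol{u})\}$ with $\boldsymbol{u}=\boldsymbol{u}(\rho)$. *)

From HB Require Import structures.
From mathcomp Require Import all_boot all_order all_algebra.
From mathcomp Require Import all_classical all_reals all_analysis.
Set Implicit Arguments. Unset Strict Implicit. Unset Printing Implicit Defensive.
Import Order.TTheory GRing.Theory Num.Theory.
Import numFieldNormedType.Exports.
Local Open Scope classical_set_scope.
Local Open Scope ring_scope.

Section Defs.
Variable R : realType.

Definition l_nondecreasing (l : R -> R) : Prop :=
  forall a b : R, a <= b -> l a <= l b.

Definition l_convex (l : R -> R) : Prop :=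
  forall (a b t : R), 0 <= t -> t <= 1 ->
    l (t * a + (1 - t) * b) <= t * l a + (1 - t) * l b.

Definition inf_lt (l : R -> R) (lam : R) : Prop := exists a : R, l a < lam.

Definition Assumption1 (l : R -> R) (lam : R) : Prop :=
  [/\ l_nondecreasing l, l_convex l & inf_lt l lam].

Definition Bsubdiff (g : R -> R) (a : R) : set R :=
  [set v | exists xs : nat -> R,
      [/\ forall k, derivable g (xs k) 1,
          xs @ \oo --> a &
          (fun k => (derive1 g) (xs k)) @ \oo --> v]].

Definition convex_hull (S : set R) : set R :=
  [set v | exists (n : nat) (w p : 'I_n -> R),
      [/\ forall i, 0 <= w i, \sum_(i < n) w i = 1,
          forall i, S (p i) & v = \sum_(i < n) w i * p i]].

Definition clarke (g : R -> R) (a : R) : set R := convex_hull (Bsubdiff g a).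

Definition locally_lipschitz_at (g : R -> R) (a : R) : Prop :=
  exists (r K : R), 0 < r /\
    forall y z, `|y - a| < r -> `|z - a| < r -> `|g y - g z| <= K * `|y - z|.

Definition dir_differentiable_at (g : R -> R) (a : R) : Prop :=
  forall d : R, exists Ld : R,
    (fun t => (g (a + t * d) - g a) / t) @ at_right 0 --> Ld.

Definition semismooth_at (g : R -> R) (a : R) : Prop :=
  [/\ locally_lipschitz_at g a, dir_differentiable_at g a &
      forall eps : R, 0 < eps -> exists delta : R, 0 < delta /\
        forall h V : R, `|h| < delta -> clarke g (a + h) V ->
          `|g (a + h) - g a - V * h| <= eps * `|h| ].

Definition Assumption3 (l : R -> R) : Prop :=
  [/\ forall a : R, derivable l a 1,
      exists a b : R, l a != l b &
      forall a : R, semismooth_at (derive1 l) a].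

Definition Lsum (l : R -> R) (m : nat) (u : 'cV[R]_m) : R :=
  \sum_(i < m) l (u i 0).

Definition gradL (l : R -> R) (m : nat) (u : 'cV[R]_m) : 'cV[R]_m :=
  \col_i (derive1 l) (u i 0).

Definition Zset (l : R -> R) (lam : R) (m : nat) : set 'cV[R]_m :=
  [set z | m%:R^-1 * Lsum l z <= lam].

Definition KKT (l : R -> R) (lam : R) (m : nat) (x u : 'cV[R]_m) (rho : R) : Prop :=
  [/\ forall i, u i 0 - x i 0 + rho / m%:R * (derive1 l) (u i 0) = 0,
      rho * (m%:R^-1 * Lsum l u - lam) = 0,
      0 <= rho &
      m%:R^-1 * Lsum l u <= lam].

Definition ueq (l : R -> R) (m : nat) (x : 'cV[R]_m) (rho : R) : set 'cV[R]_m :=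
  [set u | u - x + (rho / m%:R) *: gradL l u = 0].

Definition usol (l : R -> R) (m : nat) (x : 'cV[R]_m) (rho : R) : 'cV[R]_m :=
  xget 0 (ueq l x rho).

Definition Hfun (l : R -> R) (lam : R) (m : nat) (x : 'cV[R]_m) (rho : R) : R :=
  Lsum l (usol l x rho) - m%:R * lam.

Definition gen_jac (l : R -> R) (m : nat) (u : 'cV[R]_m) : set 'M[R]_m :=
  [set Lam | exists eta : 'rV[R]_m,
      (forall i, clarke (derive1 l) (u i 0) (eta 0 i)) /\ Lam = diag_mx eta].

Definition KH (l : R -> R) (m : nat) (x : 'cV[R]_m) (rho : R) : set R :=
  [set h | exists Lam : 'M[R]_m,
      gen_jac l (usol l x rho) Lam /\
      h = - (((gradL l (usol l x rho))^T
               *m invmx (m%:R%:M + rho *: Lam)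
               *m gradL l (usol l x rho)) 0 0)].

End Defs.

From HB Require Import structures.
From mathcomp Require Import all_boot all_order all_algebra.
From mathcomp Require Import all_classical all_reals all_analysis.
From mathcomp Require Import ring lra.
Import Order.TTheory GRing.Theory Num.Theory.
Import numFieldNormedType.Exports.
Set Implicit Arguments. Unset Strict Implicit.
Local Open Scope classical_set_scope.
Local Open Scope ring_scope.

(* Componentwise, u(rho) solves t + c l'(t) = x_i with c = rho/m.  Convexity and
   monotonicity of l make l' nondecreasing and nonnegative, and semismoothness makes
   it continuous, so t |-> t + c l'(t) is an increasing continuous bijection whose
   inverse (the resolvent) decreases pointwise as c grows: u(rho) is well defined and
   entrywise nonincreasing in rho, hence so is H.  At a KKT point, rho_star = 0 or
   l'(u) = 0 would give u = x, contradicting x outside Z.  The Clarke subdifferential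
   of the nondecreasing l' is nonnegative, so m I + rho_star Lambda is a positive diagonal
   matrix and the quadratic form defining K_H(rho_star) is negative. *)

Section DifferenceQuotients.
Variable R : realType.
Implicit Types (f : R -> R) (a v c : R).

Lemma derive_le_quotient f a v c : derivable f a v ->
  (forall h : R, 0 < h -> h < 1 -> h^-1 * (f (h * v + a) - f a) <= c) ->
  'D_v f a <= c.
Proof.
move=> df quot_le; rewrite /derive (cvg_at_rightE _ _ df); apply: limr_le.
  by apply/cvgP; apply: cvg_dnbhs_at_right; exact: df.
near=> h; apply: quot_le; near: h; [exact: nbhs_right_gt | exact: nbhs_right_lt].
Unshelve. all: end_near. Qed.

Lemma derive_ge_quotient f a v c : derivable f a v ->
  (forall h : R, 0 < h -> h < 1 -> c <= h^-1 * (f (h * v + a) - f a)) ->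
  c <= 'D_v f a.
Proof.
move=> df quot_ge; rewrite /derive (cvg_at_rightE _ _ df); apply: limr_ge.
  by apply/cvgP; apply: cvg_dnbhs_at_right; exact: df.
near=> h; apply: quot_ge; near: h; [exact: nbhs_right_gt | exact: nbhs_right_lt].
Unshelve. all: end_near. Qed.

Lemma derive1_ge0 f a : l_nondecreasing f -> derivable f a 1 ->
  0 <= derive1 f a.
Proof.
move=> f_nd df; rewrite derive1E; apply: derive_ge_quotient => // h h0 _.
by rewrite mulr1 mulr_ge0 ?invr_ge0 ?(ltW h0) // subr_ge0 f_nd // lerDr ltW.
Qed.

Lemma derive1_convex_tangent f a b : l_convex f -> derivable f a 1 ->
  derive1 f a * (b - a) <= f b - f a.
Proof.
move=> f_cvx df; have dif : differentiable f a by apply/derivable1_diffP.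
have -> : derive1 f a * (b - a) = 'D_(b - a) f a.
  by rewrite deriveE // deriv1E // mulrC.
apply: derive_le_quotient => [|h h0 h1]; first exact: diff_derivable.
have := f_cvx b a h (ltW h0) (ltW h1).
have -> : h * b + (1 - h) * a = h * (b - a) + a by ring.
by move=> cvx_ineq; rewrite mulrC ler_pdivrMr //; lra.
Qed.

Lemma derive1_convex_nondecreasing f : l_convex f ->
  (forall a, derivable f a 1) -> l_nondecreasing (derive1 f).
Proof.
move=> f_cvx df a b ab.
have := derive1_convex_tangent b f_cvx (df a).
have := derive1_convex_tangent a f_cvx (df b).
move: ab; rewrite le_eqVlt => /orP[/eqP -> //|]; nra.
Qed.

End DifferenceQuotients.

Section ClarkeSubdifferential.
Variable R : realType.
Implicit Types (g : R -> R) (a v : R).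

Lemma clarke_ge0 g a v : l_nondecreasing g -> clarke g a v -> 0 <= v.
Proof.
move=> g_nd [n [w [p [w_ge0 _ Bp ->]]]].
apply: sumr_ge0 => i _; rewrite mulr_ge0 //.
have [xs [dxs _ cvg_v]] := Bp i.
by apply: (cvgr_to_ge cvg_v); near=> k; exact: derive1_ge0.
Unshelve. all: end_near. Qed.

Lemma locally_lipschitz_cvg g a : locally_lipschitz_at g a -> g x @[x --> a] --> g a.
Proof.
case=> r [K [r_gt0 g_lip]]; apply/cvgrPdist_lt => e e_gt0.
have K1_gt0 : 0 < `|K| + 1 by rewrite ltr_pwDr.
have d_gt0 : 0 < Num.min r (e / (`|K| + 1)) by rewrite lt_min r_gt0 divr_gt0.
near=> t.
have ta_lt : `|a - t| < Num.min r (e / (`|K| + 1)).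
  by near: t; apply: cvgr_dist_lt => //; exact: cvg_id.
move: ta_lt; rewrite lt_min => /andP[ta_r ta_e].
have := g_lip a t; rewrite subrr normr0 distrC => /(_ r_gt0 ta_r) g_le.
apply: (le_lt_trans g_le); apply: (@le_lt_trans _ _ ((`|K| + 1) * `|a - t|)).
  by rewrite ler_wpM2r // (le_trans (ler_norm K)) // lerDl.
by rewrite mulrC -ltr_pdivlMr.
Unshelve. all: end_near. Qed.
End ClarkeSubdifferential.

Section Resolvent.
Variable R : realType.
Variable d : R -> R.
Hypotheses (d_nd : l_nondecreasing d) (d_ge0 : forall t, 0 <= d t).

Lemma resolvent_antitone c1 c2 t1 t2 y : 0 <= c1 -> c1 <= c2 ->
  t1 + c1 * d t1 = y -> t2 + c2 * d t2 = y -> t2 <= t1.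
Proof.
move=> c1_ge0 c12 eq1 eq2; case: (lerP t2 t1) => // t12.
have := d_nd (ltW t12); have := d_ge0 t2; nra.
Qed.

Lemma resolvent_inj c t1 t2 : 0 <= c ->
  t1 + c * d t1 = t2 + c * d t2 -> t1 = t2.
Proof.
move=> c_ge0 eq12; apply/eqP; rewrite eq_le.
by rewrite (resolvent_antitone c_ge0 (lexx c) eq12 erefl)
  (resolvent_antitone c_ge0 (lexx c) (esym eq12) erefl).
Qed.

Lemma resolvent_exists c y : 0 <= c -> continuous d ->
  exists t, t + c * d t = y.
Proof.
move=> c_ge0 d_cont; pose phi t := t + c * d t.
have phi_cont : continuous phi.
  by move=> t; apply: cvgD; [exact: cvg_id | apply: cvgM; [exact: cvg_cst | exact: d_cont]].
have lo_le_y : y - c * d y <= y by rewrite lerBlDr lerDl mulr_ge0.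
have [| |t _ phi_t] := @IVT R phi _ _ y lo_le_y.
- exact: continuous_subspaceT.
- rewrite ge_min le_max {2}/phi lerDl mulr_ge0 // orbT andbT /phi.
  have : d (y - c * d y) <= d y by exact: d_nd.
  have := d_ge0 y; nra.
- by exists t.
Qed.

End Resolvent.

Section DiagonalQuadraticForm.
Variable R : realFieldType.
Variable n : nat.
Implicit Types (e : 'rV[R]_n) (g : 'cV[R]_n).

Lemma invmx_diag e : (forall i, e 0 i != 0) ->
  invmx (diag_mx e) = diag_mx (\row_i (e 0 i)^-1).
Proof.
move=> e_neq0.
have e_inv : diag_mx e *m diag_mx (\row_i (e 0 i)^-1) = 1%:M.
  by rewrite mulmx_diag; apply/matrixP => i j; rewrite !mxE mulfV.
have [e_unit _] := mulmx1_unit e_inv.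
by rewrite -[RHS](mulKmx e_unit) e_inv mulmx1.
Qed.

Lemma diag_quad_gt0 e g : (forall i, 0 < e 0 i) -> (exists i, g i 0 != 0) ->
  0 < (g^T *m diag_mx e *m g) 0 0.
Proof.
move=> e_gt0 [i gi_neq0].
have -> : (g^T *m diag_mx e *m g) 0 0 = \sum_j e 0 j * g j 0 ^+ 2.
  by rewrite mul_mx_diag !mxE; apply: eq_bigr => j _; rewrite !mxE; ring.
have term_i_gt0 : 0 < e 0 i * g i 0 ^+ 2 by rewrite mulr_gt0 ?exprn_even_gt0.
have rest_ge0 : 0 <= \sum_(j | j != i) e 0 j * g j 0 ^+ 2.
  by apply: sumr_ge0 => j _; rewrite mulr_ge0 ?sqr_ge0 ?ltW.
rewrite (bigD1 i) //=; lra.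
Qed.

End DiagonalQuadraticForm.

Section ProjectionEquation.
Variables (R : realType) (l : R -> R) (m : nat) (x : 'cV[R]_m).
Implicit Types (lam rho h : R) (u : 'cV[R]_m).

Lemma ueqP rho u : ueq l x rho u <->
  forall i, u i 0 + rho / m%:R * derive1 l (u i 0) = x i 0.
Proof.
split=> [u_eq i | u_eq].
  have /matrixP/(_ i 0) := u_eq; rewrite /gradL !mxE addrAC => /eqP.
  by rewrite subr_eq0 => /eqP.
by apply/matrixP => i j; rewrite (ord1 j) /gradL !mxE addrAC -(u_eq i) subrr.
Qed.

Lemma KKT_ueq lam u rho : KKT l lam x u rho -> ueq l x rho u.
Proof. by case=> stationary _ _ _; apply/ueqP => i; have := stationary i; lra. Qed.

Lemma KKT_Zset lam u rho : KKT l lam x u rho ->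
  (forall i, rho * derive1 l (u i 0) = 0) -> Zset l lam x.
Proof.
move=> [stationary _ _ feasible] grad_0.
suff <- : u = x by [].
apply/matrixP => i j; rewrite (ord1 j); apply/eqP; rewrite -subr_eq0.
by have := stationary i; rewrite mulrAC grad_0 mul0r addr0 => ->.
Qed.

Lemma KKT_multiplier_gt0 lam u rho : ~ Zset l lam x ->
  KKT l lam x u rho -> 0 < rho.
Proof.
move=> xNZ kkt; have [_ _ rho_ge0 _] := kkt.
rewrite lt_def rho_ge0 andbT; apply/eqP => rho_0; apply: xNZ.
by apply: KKT_Zset kkt _ => i; rewrite rho_0 mul0r.
Qed.

Lemma KKT_derive1_neq0 lam u rho : ~ Zset l lam x ->
  KKT l lam x u rho -> exists i, derive1 l (u i 0) != 0.
Proof.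
move=> xNZ kkt; have [//|grad_0] := pselect (exists i, derive1 l (u i 0) != 0).
exfalso; apply/xNZ/(KKT_Zset kkt) => i.
by case: (eqVneq (derive1 l (u i 0)) 0) => [->|g_i]; [rewrite mulr0 | case: grad_0; exists i].
Qed.

Hypotheses (d_nd : l_nondecreasing (derive1 l))
  (d_ge0 : forall t, 0 <= derive1 l t) (d_cont : continuous (derive1 l)).

Lemma usolP rho : 0 <= rho -> ueq l x rho (usol l x rho).
Proof.
move=> rho_ge0; apply: xgetPex.
have step_ge0 : 0 <= rho / m%:R by rewrite divr_ge0.
have /choice [t t_eq] : forall i, exists t, t + rho / m%:R * derive1 l t = x i 0.
  by move=> i; exact: resolvent_exists.
by exists (\col_i t i); apply/ueqP => i; rewrite mxE.
Qed.

Lemma usol_unique rho u : 0 <= rho -> ueq l x rho u -> usol l x rho = u.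
Proof.
move=> rho_ge0 /ueqP u_eq; have /ueqP usol_eq := usolP rho_ge0.
apply/matrixP => i j; rewrite (ord1 j).
apply: (resolvent_inj d_nd d_ge0 (divr_ge0 rho_ge0 (ler0n _ m))).
by rewrite u_eq usol_eq.
Qed.

Lemma usol_antitone (rho1 rho2 : R) i : 0 <= rho1 -> rho1 <= rho2 ->
  usol l x rho2 i 0 <= usol l x rho1 i 0.
Proof.
move=> rho1_ge0 rho12; have rho2_ge0 := le_trans rho1_ge0 rho12.
have /ueqP eq1 := usolP rho1_ge0; have /ueqP eq2 := usolP rho2_ge0.
apply: (resolvent_antitone d_nd d_ge0 _ _ (eq1 i) (eq2 i)).
  by rewrite divr_ge0.
by rewrite ler_wpM2r ?invr_ge0.
Qed.

Lemma Hfun_nonincreasing lam (rho1 rho2 : R) : l_nondecreasing l ->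
  0 <= rho1 -> rho1 <= rho2 -> Hfun l lam x rho2 <= Hfun l lam x rho1.
Proof.
move=> l_nd rho1_ge0 rho12; rewrite lerD2r; apply: ler_sum => i _.
exact/l_nd/usol_antitone.
Qed.

Lemma KH_lt0 rho h : (0 < m)%N -> 0 < rho ->
  (exists i, derive1 l (usol l x rho i 0) != 0) -> KH l x rho h -> h < 0.
Proof.
move=> m_gt0 rho_gt0 grad_neq0 [_ [[eta [eta_clarke ->]] ->]].
set e := const_mx m%:R + rho *: eta.
have e_gt0 i : 0 < e 0 i.
  have := mulr_ge0 (ltW rho_gt0) (clarke_ge0 d_nd (eta_clarke i)).
  have m_pos : 0 < m%:R :> R by rewrite ltr0n.
  rewrite !mxE; lra.
have -> : m%:R%:M + rho *: diag_mx eta = diag_mx e.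
  by rewrite -diag_const_mx -linearZ -linearD.
rewrite oppr_lt0 invmx_diag => [|i]; last exact: lt0r_neq0.
apply: diag_quad_gt0 => [i|]; first by rewrite mxE invr_gt0.
by have [i g_i] := grad_neq0; exists i; rewrite mxE.
Qed.

End ProjectionEquation.

Theorem mainTheorem10 (R : realType) (l : R -> R) (lam : R) (m : nat)
    (x : 'cV[R]_m) :
  (0 < m)%N ->
  Assumption1 l lam -> Assumption3 l ->
  ~ Zset l lam x ->
  (forall rho1 rho2 : R, 0 < rho1 -> rho1 <= rho2 ->
     Hfun l lam x rho2 <= Hfun l lam x rho1) /\
  (forall (u : 'cV[R]_m) (rhostar : R), KKT l lam x u rhostar ->
     0 < rhostar /\ (forall h : R, KH l x rhostar h -> h < 0)).
Proof.
move=> m_gt0 [l_nd l_cvx _] [l_der _ l'_ss] xNZ.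
have d_nd := derive1_convex_nondecreasing l_cvx l_der.
have d_ge0 t := derive1_ge0 l_nd (l_der t).
have d_cont : continuous (derive1 l).
  by move=> t; have [l'_lip _ _] := l'_ss t; exact: locally_lipschitz_cvg.
split=> [rho1 rho2 rho1_gt0 | u rho kkt].
  by apply: Hfun_nonincreasing => //; exact: ltW.
have rho_gt0 := KKT_multiplier_gt0 xNZ kkt.
split=> // h; apply: KH_lt0 => //.
by rewrite (usol_unique d_nd d_ge0 d_cont (ltW rho_gt0) (KKT_ueq kkt));
  exact: KKT_derive1_neq0 xNZ kkt.
Qed.
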